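(* For each natural number $n$, the restriction of the preorder $\leqslant_{\vec{|\square[n]|}}$ to the vertex set $\vec{|\mathrm{sk}_0(\square[n])|}$ equals the restriction of the preorder $\leqslant_{\vec{|\mathrm{sk}_1(\square[n])|}}$ to that same vertex set.
   Context: Streams: a circulation on a space $X$ assigns to each open $V\subset X$ a preorder $\leqslant_V$ such that for every collection $\mathcal{O}$ of open sets, $\leqslant_{\bigcup\mathcal{O}}$ is the preorder with smallest graph containing $\bigcup_{V\in\mathcal{O}}\mathrm{graph}(\leqslant_V)$; a stream is a space with a circulation, $\leqslant_X$ being the preorder on $X$ itself; stream maps are continuous maps with $f(x)\leqslant_V f(y)$ whenever $x\leqslant_{f^{-1}V}y$. The category of streams is cocomplete with colimits computed on underlying spaces (final circulation). $\square$ is the smallest subcategory of posets and monotone maps closed under cartesian products (unit $[0]=\{0\}$) containing $\delta_\pm:[0]\to[1]=\{0<1\}$; a precubical set is a functor $\square^{op}\to\mathbf{Set}$; $\square[n]=\square(-,[1]^n)$; for a precubical set $X$, $\mathrm{sk}_k(X)$ is the smallest sub-precubical set $A\subseteq X$ with $A_k=X_k$. $\vec\square[1]$ is $[0,1]$ with circulation $x\leqslant_V y$ iff $x\le y$ and $[x,y]\subset V$, $\vec\square[n]$ is its $n$-fold product in streams, and the stream realization of $X$ is the coend $\vec{|X|}=\int^{[1]^n}X_n\cdot\vec\square[n]$ in streams. Thus $\vec{|\square[n]|}=\vec\square[n]$ (underlying space $\mathbb{I}^n$), $\vec{|\mathrm{sk}_0(\square[n])|}$ is the set of vertices $\{0,1\}^n$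 and $\vec{|\mathrm{sk}_1(\square[n])|}$ is the union of the edges of the cube, as streams. *)

From Stdlib Require Import Reals Lra Relations.
From mathcomp Require Import all_boot.

Set Implicit Arguments.
Unset Strict Implicit.
Unset Printing Implicit Defensive.

(* A stream: a carrier, a family of open sets, and a circulation
   (a relation <=_V for every subset V; only open V matter). *)
Record Stream := {
  st_pt   : Type;
  st_open : (st_pt -> Prop) -> Prop;
  st_circ : (st_pt -> Prop) -> st_pt -> st_pt -> Prop
}.
Arguments st_open : clear implicits.
Arguments st_circ : clear implicits.

Definition bigU (X : Type) (O : (X -> Prop) -> Prop) : X -> Prop :=
  fun x => exists U, O U /\ U x.

Definition is_topology (S : Stream) : Prop :=
  st_open S (fun _ => True) /\
  (forall U V, st_open S U -> st_open S V -> st_open S (fun x => U x /\ V x)) /\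
  (forall O : (st_pt S -> Prop) -> Prop,
      (forall U, O U -> st_open S U) -> st_open S (bigU O)).

Definition gen_preorder (X : Type) (W : X -> Prop) (R : X -> X -> Prop) :
  X -> X -> Prop :=
  fun x y => W x /\ W y /\ clos_refl_trans X R x y.

Definition is_circulation (S : Stream) : Prop :=
  forall O : (st_pt S -> Prop) -> Prop,
    (forall U, O U -> st_open S U) ->
    forall x y,
      st_circ S (bigU O) x y <->
      gen_preorder (bigU O)
        (fun a b => exists V, O V /\ st_circ S V a b) x y.

Definition is_stream (S : Stream) : Prop := is_topology S /\ is_circulation S.

Definition continuous (S T : Stream) (f : st_pt S -> st_pt T) : Prop :=
  forall V, st_open T V -> st_open S (fun x => V (f x)).

Definition stream_map (S T : Stream) (f : st_pt S -> st_pt T) : Prop :=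
  continuous f /\
  forall V, st_open T V -> forall x y,
    st_circ S (fun z => V (f z)) x y -> st_circ T V (f x) (f y).

Definition st_le (S : Stream) : st_pt S -> st_pt S -> Prop :=
  st_circ S (fun _ => True).

Definition Ipt : Type := {x : R | Rle 0 x /\ Rle x 1}.

Definition Iopen (U : Ipt -> Prop) : Prop :=
  forall x, U x -> exists eps : R, Rlt 0 eps /\
    forall y : Ipt, Rlt (Rabs (Rminus (proj1_sig y) (proj1_sig x))) eps -> U y.

Definition Icirc (V : Ipt -> Prop) (x y : Ipt) : Prop :=
  Rle (proj1_sig x) (proj1_sig y) /\
  forall z : Ipt, Rle (proj1_sig x) (proj1_sig z) /\ Rle (proj1_sig z) (proj1_sig y) -> V z.

Definition Istream : Stream := {| st_pt := Ipt; st_open := Iopen; st_circ := Icirc |}.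

Lemma I0_prf : Rle 0 0 /\ Rle 0 1. Proof. lra. Qed.
Lemma I1_prf : Rle 0 1 /\ Rle 1 1. Proof. lra. Qed.
Definition I0 : Ipt := exist _ R0 I0_prf.
Definition I1 : Ipt := exist _ R1 I1_prf.
Definition Ib (b : bool) : Ipt := if b then I1 else I0.

Definition is_product (m : nat) (P : Stream) (p : 'I_m -> st_pt P -> Ipt) : Prop :=
  is_stream P /\
  (forall i, @stream_map P Istream (p i)) /\
  forall (S : Stream), is_stream S ->
  forall g : 'I_m -> st_pt S -> Ipt, (forall i, @stream_map S Istream (g i)) ->
  exists h : st_pt S -> st_pt P,
    stream_map h /\ (forall i z, p i (h z) = g i z) /\
    forall h' : st_pt S -> st_pt P,
      stream_map h' -> (forall i z, p i (h' z) = g i z) -> forall z, h' z = h z.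

(* The box category.  A morphism [1]^m -> [1]^n is encoded by the      *)
(* function f : 'I_n -> bool + 'I_m telling, for each output coordinate, *)
(* whether it is constant (inl b) or a copy of input coordinate (inr i); *)
(* the copied coordinates form an order preserving bijection.  These    *)
(* are exactly the composites of cartesian products of id, delta_-,    *)
(* delta_+.                                                             *)

Definition is_box (m n : nat) (f : 'I_n -> bool + 'I_m) : Prop :=
  (forall i : 'I_m, exists j, f j = inr i) /\
  (forall (j j' : 'I_n) (i i' : 'I_m),
      f j = inr i -> f j' = inr i' -> (j < j')%N -> (i < i')%N).

Definition box_comp (m' m n : nat) (f : 'I_n -> bool + 'I_m)
  (g : 'I_m -> bool + 'I_m') : 'I_n -> bool + 'I_m' :=
  fun j => match f j with inl b => inl b | inr i => g i end.

Unset Implicit Arguments.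
Section Realization.
Variables (cube : nat -> Stream) (proj : forall m, 'I_m -> st_pt (cube m) -> Ipt).

Definition realizes (m' m : nat) (g : 'I_m -> bool + 'I_m')
  (h : st_pt (cube m') -> st_pt (cube m)) : Prop :=
  stream_map h /\
  forall (i : 'I_m) z,
    proj m i (h z) = match g i with inl b => Ib b | inr i' => proj m' i' z end.

(* cocone over the cells of sk_k(square[n]) (cells [1]^m -> [1]^n with m <= k) *)
Definition is_cocone (n k : nat) (S : Stream)
  (c : forall m, ('I_n -> bool + 'I_m) -> st_pt (cube m) -> st_pt S) : Prop :=
  (forall m f, (m <= k)%N -> is_box f -> stream_map (c m f)) /\
  (forall m m' (f : 'I_n -> bool + 'I_m) (g : 'I_m -> bool + 'I_m') h,
      (m <= k)%N -> (m' <= k)%N -> is_box f -> is_box g -> realizes m' m g h ->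
      forall z, c m' (box_comp f g) z = c m f (h z)).


(* (K, iota) is the stream realization of sk_k(square[n]), i.e. the coend
   int^{[1]^m} sk_k(square[n])_m . ->square[m] computed in streams *)
Definition is_realization_skel (n k : nat) (K : Stream)
  (iota : forall m, ('I_n -> bool + 'I_m) -> st_pt (cube m) -> st_pt K) : Prop :=
  is_stream K /\ is_cocone n k K iota /\
  forall S, is_stream S ->
  forall c, is_cocone n k S c ->
  exists u : st_pt K -> st_pt S,
    stream_map u /\
    (forall m f, (m <= k)%N -> is_box f -> forall z, u (iota m f z) = c m f z) /\
    forall u' : st_pt K -> st_pt S, stream_map u' ->
      (forall m f, (m <= k)%N -> is_box f -> forall z, u' (iota m f z) = c m f z) ->
      forall x, u' x = u x.

End Realization.

(* The vertex preorders of the realizations of square[n] and of its 1-skeleton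
   agree: both are the coordinatewise order on {0,1}^n.

   - Upper bound.  The points 'I_n -> [0,1] with the indiscrete topology and the
     coordinatewise order form a stream; sending a cell f : [1]^m -> [1]^n to the
     map z |-> (f_j(z))_j is a cocone over every skeleton, so the universal
     property of any realization yields a stream map to this stream, which
     carries the vertex preorder into the coordinatewise order.
   - Lower bound.  The realization of the 1-skeleton contains the edges: each
     edge is the image of ->square[1], whose endpoints satisfy 0 <= 1 because
     [0,1] itself is a stream and the universal property of the product
     ->square[1] gives a stream map [0,1] -> ->square[1].  Raising one
     coordinate at a time then connects any two coordinatewise comparable
     vertices by a chain of edges. *)
From Pilot Require Import Defs.
From Stdlib Require Import Reals Relations Lra Classical FunctionalExtensionality PropExtensionality.
From mathcomp Require Import all_boot.

Set Implicit Arguments.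
Unset Strict Implicit.

Lemma pred_ext (X : Type) (U V : X -> Prop) : (forall x, U x <-> V x) -> U = V.
Proof.
by move=> UV; apply: functional_extensionality => x; apply: propositional_extensionality.
Qed.

Lemma rel_ext (X : Type) (R1 R2 : X -> X -> Prop) :
  (forall x y, R1 x y <-> R2 x y) -> R1 = R2.
Proof.
move=> R12; apply: functional_extensionality => x.
by apply: functional_extensionality => y; apply: propositional_extensionality.
Qed.

Section StreamFacts.
Variable S : Stream.
Hypothesis S_stream : is_stream S.

Lemma full_open : st_open S (fun _ => True).
Proof. by case: S_stream => -[]. Qed.

Lemma open_ext (U V : st_pt S -> Prop) :
  (forall x, U x <-> V x) -> st_open S U -> st_open S V.
Proof. by move=> /pred_ext ->. Qed.

Lemma open_full (U : st_pt S -> Prop) : (forall x, U x) -> st_open S U.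
Proof. by move=> hU; apply: (open_ext _ full_open) => x. Qed.

(* the empty set is the union of the empty collection *)
Lemma open_empty (U : st_pt S -> Prop) : (forall x, ~ U x) -> st_open S U.
Proof.
move=> hU; case: S_stream => -[_ [_ unions]] _.
have empty_open : st_open S (Defs.bigU (fun _ : st_pt S -> Prop => False)) by apply: unions.
by apply: (open_ext _ empty_open) => x; split=> [[W []] | /hU].
Qed.

(* the circulation axiom for the one-element collection {U}: on an open set the
   circulation is a preorder with graph inside U x U *)
Lemma circ_single (U : st_pt S -> Prop) : st_open S U ->
  forall x y, st_circ S U x y <-> gen_preorder U (st_circ S U) x y.
Proof.
move=> hU x y; case: S_stream => _ circ.
have openO : forall W, W = U -> st_open S W by move=> W ->.
have EU : Defs.bigU (fun W => W = U) = U.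
  by apply: pred_ext => z; split=> [[W [-> //]] | Uz]; exists U.
have ER : (fun a b => exists V, V = U /\ st_circ S V a b) = st_circ S U.
  by apply: rel_ext => a b; split=> [[V [-> //]] | h]; exists U.
by have := circ _ openO x y; rewrite EU ER.
Qed.

Lemma circ_sub (U : st_pt S -> Prop) x y :
  st_open S U -> st_circ S U x y -> U x /\ U y.
Proof. by move=> hU /(circ_single hU) [Ux [Uy _]]. Qed.

Lemma circ_refl (U : st_pt S -> Prop) x : st_open S U -> U x -> st_circ S U x x.
Proof. by move=> hU Ux; apply/(circ_single hU); do 2 split=> //; apply: rt_refl. Qed.

Lemma st_le_refl (x : st_pt S) : st_le x x.
Proof. exact: circ_refl full_open I. Qed.

Lemma st_le_trans (x y z : st_pt S) : st_le x y -> st_le y z -> st_le x z.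
Proof.
move=> xy yz; apply/(circ_single full_open); do 2 split=> //.
by apply: rt_trans; apply: rt_step; [exact: xy | exact: yz].
Qed.

End StreamFacts.

Lemma map_le (S T : Stream) (f : st_pt S -> st_pt T) x y :
  is_stream T -> stream_map f -> st_le x y -> st_le (f x) (f y).
Proof. by move=> hT [_ hf] xy; apply: hf (full_open hT) x y xy. Qed.

(* constant maps are stream maps: preimages are empty or full, and the
   circulation of a stream is reflexive on its open sets *)
Lemma const_map (S T : Stream) (t : st_pt T) :
  is_stream S -> is_stream T -> stream_map (fun _ : st_pt S => t).
Proof.
move=> hS hT.
have cont : continuous (fun _ : st_pt S => t).
  move=> V _; case: (classic (V t)) => Vt.
  - exact: open_full.
  - exact: open_empty.
split=> // V hV x y /(circ_sub hS (cont V hV)) [Vt _].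
exact: circ_refl.
Qed.

Section DirectedInterval.
Local Open Scope R_scope.

Lemma Iopen_val (V : Ipt -> Prop) a b :
  Iopen V -> V a -> proj1_sig b = proj1_sig a -> V b.
Proof.
move=> hV Va e; have [eps [eps_pos ball]] := hV a Va.
by apply: ball; rewrite e Rminus_diag Rabs_R0.
Qed.

Lemma Istream_topology : is_topology Istream.
Proof.
split; [|split].
- by move=> x _; exists 1; split=> //; lra.
- move=> U V hU hV x [Ux Vx].
  have [e1 [e1_pos ball1]] := hU x Ux; have [e2 [e2_pos ball2]] := hV x Vx.
  exists (Rmin e1 e2); split; first exact: Rmin_glb_lt.
  move=> y hy; split; [apply: ball1 | apply: ball2].
  + exact: Rlt_le_trans hy (Rmin_l _ _).
  + exact: Rlt_le_trans hy (Rmin_r _ _).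
- move=> O hO x [U [OU Ux]]; have [e [e_pos ball]] := hO U OU x Ux.
  by exists e; split=> // y /ball Uy; exists U.
Qed.

Lemma lub_approx (A : R -> Prop) s eps :
  is_lub A s -> 0 < eps -> exists t, A t /\ s - eps < t.
Proof.
move=> [_ least] eps_pos; apply: NNPP => none.
have : s <= s - eps; last lra.
apply: least => t At; apply: Rnot_lt_le => lt; apply: none; by exists t.
Qed.

Section Circulation.
Variable O : (Ipt -> Prop) -> Prop.
Hypothesis O_open : forall U, O U -> Iopen U.

Let W := Defs.bigU O.
Let step (a b : Ipt) := exists V, O V /\ Icirc V a b.

(* Connectedness of [x,y]: if the segment is covered by O, then x reaches y by
   finitely many steps, each inside one member of O.  The supremum s of the
   reachable part of [x,y] lies in some V in O; reachability propagates across
   the ball of V around s, so s cannot be below y and y itself is reached. *)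
Lemma cover_chain (x y : Ipt) :
  proj1_sig x <= proj1_sig y ->
  (forall z : Ipt, proj1_sig x <= proj1_sig z <= proj1_sig y -> W z) ->
  clos_refl_trans Ipt step x y.
Proof.
move=> xy cover.
pose A t := proj1_sig x <= t <= proj1_sig y /\
            forall z : Ipt, proj1_sig z = t -> clos_refl_trans Ipt step x z.
have Ax : A (proj1_sig x).
  split; first lra.
  move=> z ez; apply: rt_step; have [V [OV Vx]] := cover x (conj (Rle_refl _) xy).
  exists V; split=> //; split; first lra.
  move=> w hw; apply: (Iopen_val (O_open OV) Vx); lra.
have A_bound : bound A by exists (proj1_sig y) => t [[_ ty] _].
have [s s_lub] := completeness A A_bound (ex_intro _ _ Ax).
have xs : proj1_sig x <= s by apply: (proj1 s_lub).
have s_le_y : s <= proj1_sig y by apply: (proj2 s_lub) => t [[_ ty] _].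
have s_unit : 0 <= s <= 1 by case: (proj2_sig x) (proj2_sig y) => ? ? [? ?]; lra.
have [V [OV Vs]] := cover (exist _ s s_unit) (conj xs s_le_y).
have [eps [eps_pos ball]] := O_open OV Vs.
have [t [[[xt ty] reach_t] st]] := lub_approx s_lub eps_pos.
have ts : t <= s by apply: (proj1 s_lub); split.
pose t' := Rmin (s + eps / 2) (proj1_sig y).
have t'_cases : t' = s + eps / 2 \/ t' = proj1_sig y.
  by rewrite /t' /Rmin; case: Rle_dec; [left | right].
have t_unit : 0 <= t <= 1 by case: (proj2_sig x) (proj2_sig y) => ? ? [? ?]; lra.
have At' : A t'.
  split; first by split; [case: t'_cases => ->; lra | exact: Rmin_r].
  move=> z ez; apply: (rt_trans _ _ _ (exist _ t t_unit)); first exact: reach_t.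
  apply: rt_step; exists V; split=> //; split.
    by rewrite ez /=; case: t'_cases => ->; lra.
  move=> w /= [tw wz]; apply: ball; apply: Rabs_def1;
    have := Rmin_l (s + eps / 2) (proj1_sig y); rewrite -/t' -ez; simpl; lra.
have t's : t' <= s by apply: (proj1 s_lub).
have t'y : t' = proj1_sig y by case: t'_cases t's => [-> | -> _] //; lra.
by case: At' => _; apply; rewrite t'y.
Qed.

Lemma chain_Icirc (a b : Ipt) :
  clos_refl_trans Ipt step a b -> W a -> Icirc W a b.
Proof.
elim=> {a b} [a b [V [OV [ab inV]]] | a | a b c _ IHab _ IHbc] Wa.
- by split=> // z /inV Vz; exists V.
- split; first lra.
  case: Wa => V [OV Va] z za; exists V; split=> //.
  apply: (Iopen_val (O_open OV) Va); lra.
- have [ab inab] := IHab Wa.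
  have [bc inbc] := IHbc (inab b (conj ab (Rle_refl _))).
  split; first lra.
  move=> z [az zc]; case: (Rle_dec (proj1_sig z) (proj1_sig b)) => zb.
  + by apply: inab.
  + by apply: inbc; lra.
Qed.

End Circulation.

Lemma Istream_stream : is_stream Istream.
Proof.
split; first exact: Istream_topology.
move=> O O_open x y; split.
- move=> [xy inW].
  have Wx : Defs.bigU O x by apply: inW; lra.
  have Wy : Defs.bigU O y by apply: inW; lra.
  by do 2 split=> //; apply: cover_chain.
- by move=> [Wx [_ chain]]; apply: chain_Icirc.
Qed.

End DirectedInterval.

Definition coord_order (n : nat) : Stream :=
  {| st_pt := 'I_n -> Ipt;
     st_open := fun U => (forall x, U x) \/ (forall x, ~ U x);
     st_circ := fun V x y =>
       V x /\ V y /\ forall j, Rle (proj1_sig (x j)) (proj1_sig (y j)) |}.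

Lemma coord_order_topology n : is_topology (coord_order n).
Proof.
split; [by left | split].
- move=> U V [U_full | U_empty] [V_full | V_empty].
  + by left.
  + by right=> x [_ /V_empty].
  + by right=> x [/U_empty].
  + by right=> x [/U_empty].
- move=> O O_open; case: (classic (exists U, O U /\ forall x, U x)).
  + by move=> [U [OU U_full]]; left=> x; exists U.
  + move=> no_full; right=> x [U [OU Ux]].
    case: (O_open U OU) => [U_full | U_empty]; last exact: U_empty Ux.
    by apply: no_full; exists U.
Qed.

Lemma coord_order_stream n : is_stream (coord_order n).
Proof.
split; first exact: coord_order_topology.
move=> O O_open x y; split.
- move=> [Wx [Wy xy]]; do 2 split=> //; apply: rt_step.
  case: (Wx) => U [OU Ux]; exists U; split=> //.
  by case: (O_open U OU) => [U_full | /(_ x Ux) //]; split.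
- move=> [Wx [Wy chain]]; do 2 split=> //.
  elim: chain {Wx Wy} => [a b [V [_ [_ [_ ab]]]] | a | a b c _ ab _ bc] j //.
  + exact: Rle_refl.
  + exact: Rle_trans (ab j) (bc j).
Qed.

Definition vert (n : nat) (b : 'I_n -> bool) : 'I_n -> bool + 'I_0 :=
  fun j => inl (b j).

Lemma vert_box n (b : 'I_n -> bool) : is_box (vert b).
Proof. by split=> [[] | j j' i i']. Qed.

Lemma vert_of_box0 n (v : 'I_n -> bool + 'I_0) :
  v = vert (fun j => if v j is inl b then b else false).
Proof. by apply: functional_extensionality => j; rewrite /vert; case: (v j) => [|[]]. Qed.

Definition setb n (b : 'I_n -> bool) (j0 : 'I_n) (x : bool) : 'I_n -> bool :=
  fun j => if j == j0 then x else b j.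

Unset Implicit Arguments.
Arguments vert {n}.

Section Realizations.
Variables (cube : nat -> Stream) (proj : forall m, 'I_m -> st_pt (cube m) -> Ipt).
Hypothesis cube_product : forall m, is_product (proj m).

Lemma cube_stream m : is_stream (cube m).
Proof. by case: (cube_product m). Qed.

Lemma proj_map m i : @stream_map (cube m) Istream (proj m i).
Proof. by case: (cube_product m) => _ []. Qed.

Definition coord_cell n m (f : 'I_n -> bool + 'I_m) (z : st_pt (cube m)) :
  st_pt (coord_order n) :=
  fun j => match f j with inl b => Ib b | inr i => proj m i z end.

(* cells are stream maps into the indiscrete target: continuity is automatic
   and each coordinate is monotone, being a constant or a projection *)
Lemma coord_cell_map n m (f : 'I_n -> bool + 'I_m) : stream_map (coord_cell n m f).
Proof.
have cont : continuous (coord_cell n m f).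
  move=> V [V_full | V_empty].
  - by apply: (open_full (cube_stream m)) => z; apply: V_full.
  - by apply: (open_empty (cube_stream m)) => z; apply: V_empty.
split=> // V hV x y xy.
have [Vx Vy] := circ_sub (cube_stream m) (cont V hV) xy.
do 2 split=> //; move=> j; rewrite /coord_cell.
case: (f j) => [b | i]; first exact: Rle_refl.
have V_full : forall w, V w by case: hV => // /(_ _ Vx).
have /pred_ext E : forall z, V (coord_cell n m f z) <-> True by split.
rewrite E in xy; exact: proj1 (map_le Istream_stream (proj_map m i) xy).
Qed.

(* compatibility with faces: composing with a face map only substitutes the
   realized coordinates *)
Lemma coord_cocone n k : is_cocone cube proj n k (coord_order n) (coord_cell n).
Proof.
split=> [m f _ _ | m m' f g h _ _ _ _ [_ realized] z]; first exact: coord_cell_map.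
apply: functional_extensionality => j; rewrite /coord_cell /box_comp.
by case: (f j) => [// | i]; rewrite realized; case: (g i).
Qed.

Lemma vertex_le_coordwise n k K iota (b c : 'I_n -> bool) p q :
  is_realization_skel cube proj n k K iota ->
  st_le (iota 0 (vert b) p) (iota 0 (vert c) q) -> forall j, b j -> c j.
Proof.
move=> [_ [_ universal]] bc j bj.
have [u [u_map [u_iota _]]] :=
  universal _ (coord_order_stream n) _ (coord_cocone n k).
have u_vert d r : u (iota 0 (vert d) r) = coord_cell n 0 (vert d) r.
  exact: u_iota (leq0n k) (vert_box d) r.
have := map_le (coord_order_stream n) u_map bc.
rewrite !u_vert => -[_ [_ /(_ j)]].
rewrite /coord_cell /vert bj /=; case: (c j) => //= ?; lra.
Qed.

(* ->square[0] has a single point: two maps into the terminal product agree *)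
Lemma cube0_point (p q : st_pt (cube 0)) : p = q.
Proof.
have [cube0_stream [_ universal]] := cube_product 0.
have [h [_ [_ unique]]] := universal _ cube0_stream (proj 0) (proj_map 0).
have const_h r : forall z, (fun _ => r) z = h z.
  by apply: unique; [exact: const_map | case].
by rewrite (const_h p p) -(const_h q p).
Qed.

(* ->square[1] has points with coordinate 0 and 1, comparable for its
   preorder: they are the images of 0 <= 1 under the stream map
   [0,1] -> ->square[1] given by the universal property of the product. *)
Lemma cube1_endpoints : exists e : bool -> st_pt (cube 1),
  (forall x i, proj 1 i (e x) = Ib x) /\ st_le (e false) (e true).
Proof.
have [cube1 [_ universal]] := cube_product 1.
have id_map : forall i : 'I_1, @stream_map Istream Istream (fun z => z).
  by move=> i; split=> // V _ x y.
have [h [h_map [h_proj _]]] := universal _ Istream_stream (fun _ z => z) id_map.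
exists (fun x => h (Ib x)); split=> [x i | ]; first exact: h_proj.
apply: (map_le cube1 h_map); rewrite /st_le /= /Icirc /=; split=> //; lra.
Qed.

Section Skeleton.
Variables (n k : nat) (K : Stream).
Variable iota : forall m, ('I_n -> bool + 'I_m) -> st_pt (cube m) -> st_pt K.
Hypothesis K_real : is_realization_skel cube proj n k K iota.

Let K_stream : is_stream K. Proof. by case: K_real. Qed.

(* The edge in direction j0 through b is a
   1-cell f, and its endpoints are the images of the endpoints of ->square[1]. *)
Lemma edge_le (b : 'I_n -> bool) (j0 : 'I_n) p : (0 < k)%N ->
  st_le (iota 0 (vert (setb b j0 false)) p) (iota 0 (vert (setb b j0 true)) p).
Proof.
have [_ [[cell_map compat] _]] := K_real.
move=> k_pos; have [e [e_proj e_le]] := cube1_endpoints.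
pose f : 'I_n -> bool + 'I_1 := fun j => if j == j0 then inr ord0 else inl (b j).
have f_box : is_box f.
  split=> [i | j j' i i']; first by exists j0; rewrite /f eqxx (ord1 i).
  by rewrite /f; case: (eqVneq j j0) => [-> | _]; case: (eqVneq j' j0) => [-> | _] // _ _;
    rewrite ltnn.
have endpoint x : iota 0 (vert (setb b j0 x)) p = iota 1 f (e x).
  pose g : 'I_1 -> bool + 'I_0 := fun _ => inl x.
  have g_box : is_box g by split=> [[] | j j' i i'].
  have -> : vert (setb b j0 x) = box_comp f g.
    by apply: functional_extensionality => j; rewrite /box_comp /f /vert /setb; case: (j == j0).
  apply: (compat 1 0 f g (fun _ => e x)) => //.
  by split=> [|i z]; [apply: const_map; apply: cube_stream | apply: e_proj].
by rewrite !endpoint; apply: (map_le K_stream (cell_map 1 f k_pos f_box)).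
Qed.

Lemma raise_le (b : 'I_n -> bool) (j0 : 'I_n) (x : bool) p : (0 < k)%N ->
  b j0 ==> x -> st_le (iota 0 (vert b) p) (iota 0 (vert (setb b j0 x)) p).
Proof.
move=> k_pos.
have setb_id y : b j0 = y -> setb b j0 y = b.
  by move=> <-; apply: functional_extensionality => j; rewrite /setb; case: eqP => // ->.
case: x; case bj0: (b j0) => //= _.
- by rewrite setb_id //; apply: st_le_refl.
- by rewrite -{1}(setb_id false bj0); apply: edge_le.
- by rewrite setb_id //; apply: st_le_refl.
Qed.

Definition override (s : seq 'I_n) (b c : 'I_n -> bool) : 'I_n -> bool :=
  fun j => if j \in s then c j else b j.

(* Lower bound: if every coordinate can be raised along an edge, then
   coordinatewise comparable vertices are comparable; raise the coordinates
   one at a time, following the enumeration of 'I_n. *)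
Lemma coordwise_vertex_le (b c : 'I_n -> bool) p q :
  ((0 < n)%N -> (0 < k)%N) -> (forall j, b j -> c j) ->
  st_le (iota 0 (vert b) p) (iota 0 (vert c) q).
Proof.
move=> edges bc; rewrite (cube0_point q p).
have -> : c = override (enum 'I_n) b c.
  by apply: functional_extensionality => j; rewrite /override mem_enum.
elim: (enum 'I_n) => [|j0 s IHs].
  have -> : override [::] b c = b by [].
  exact: st_le_refl.
apply: (st_le_trans K_stream IHs).
have -> : override (j0 :: s) b c = setb (override s b c) j0 (c j0).
  apply: functional_extensionality => j.
  by rewrite /override /setb in_cons; case: eqP => [-> |].
apply: raise_le; first by apply: edges; case: (n) j0 => [[]|].
by rewrite /override; case: (j0 \in s); apply/implyP => // /bc.
Qed.

Lemma vertex_le_iff (b c : 'I_n -> bool) p q :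
  ((0 < n)%N -> (0 < k)%N) ->
  st_le (iota 0 (vert b) p) (iota 0 (vert c) q) <-> (forall j, b j -> c j).
Proof.
move=> edges; split; first exact: vertex_le_coordwise K_real.
exact: coordwise_vertex_le.
Qed.

End Skeleton.
End Realizations.

Theorem mainTheorem8 (n : nat)
  (cube : nat -> Stream) (proj : forall m, 'I_m -> st_pt (cube m) -> Ipt)
  (Kn K1 : Stream)
  (iotan : forall m, ('I_n -> bool + 'I_m) -> st_pt (cube m) -> st_pt Kn)
  (iota1 : forall m, ('I_n -> bool + 'I_m) -> st_pt (cube m) -> st_pt K1) :
  (forall m, is_product (proj m)) ->
  is_realization_skel cube proj n n Kn iotan ->
  is_realization_skel cube proj n 1 K1 iota1 ->
  forall (v w : 'I_n -> bool + 'I_0) (p q : st_pt (cube 0)),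
    is_box v -> is_box w ->
    (st_le (iotan 0 v p) (iotan 0 w q) <-> st_le (iota1 0 v p) (iota1 0 w q)).
Proof.
move=> cube_product Kn_real K1_real v w p q _ _.
rewrite (vert_of_box0 v) (vert_of_box0 w).
rewrite (vertex_le_iff _ _ cube_product _ _ _ _ Kn_real) //.
by rewrite (vertex_le_iff _ _ cube_product _ _ _ _ K1_real).
Qed.
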